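(* Let $\mathcal{X}=\mathcal{X}^{(1)}\times\cdots\times\mathcal{X}^{(d)}$ with each $\mathcal{X}^{(j)}$ finite, and let $(S_i)_{i=1}^n$ be a partition of $\{1,\dots,d\}$ into pairwise disjoint nonempty sets. Let $\pi\in\mathcal{P}(\mathcal{X})$ be positive, $P\in\mathcal{L}(\mathcal{X})$ and $L_i\in\mathcal{L}(\mathcal{X}^{(S_i)})$ for $i=1,\dots,n$. Then $D^\pi_{KL}(P\|\otimes_{i=1}^nL_i)=D^\pi_{KL}(P\|\otimes_{i=1}^nP^{(S_i)}_\pi)+D^\pi_{KL}(\otimes_{i=1}^nP^{(S_i)}_\pi\|\otimes_{i=1}^nL_i)=D^\pi_{KL}(P\|\otimes_{i=1}^nP^{(S_i)}_\pi)+\sum_{i=1}^nD^{\pi^{(S_i)}}_{KL}(P^{(S_i)}_\pi\|L_i)$. Consequently $\otimes_{i=1}^nP^{(S_i)}_\pi$ is the unique minimizer and $\min_{L_i\in\mathcal{L}(\mathcal{X}^{(S_i)})}D^\pi_{KL}(P\|\otimes_{i=1}^nL_i)=D^\pi_{KL}(P\|\otimes_{i=1}^nP^{(S_i)}_\pi)$.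
   Context: $\mathcal{P}(\Omega),\mathcal{L}(\Omega)$: probability masses and transition matrices on finite $\Omega$. $D_{KL}^{\pi}(M\|L):=\sum_{x,y}\pi(x)M(x,y)\ln\frac{M(x,y)}{L(x,y)}$. For $S\subseteq\{1,\dots,d\}$: $\mathcal{X}^{(S)}=\prod_{j\in S}\mathcal{X}^{(j)}$, $x^{(S)}=(x^j)_{j\in S}$, $x^{(-S)}=(x^j)_{j\notin S}$, $\pi^{(S)}(x^{(S)})=\sum_{x^{(-S)}}\pi(x)$, $P^{(S)}_\pi(x^{(S)},y^{(S)}):=\frac{\sum_{x^{(-S)},y^{(-S)}}\pi(x)P(x,y)}{\pi^{(S)}(x^{(S)})}$. For $L_i\in\mathcal{L}(\mathcal{X}^{(S_i)})$, $(\otimes_{i=1}^nL_i)(x,y):=\prod_{i=1}^nL_i(x^{(S_i)},y^{(S_i)})$. *)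

From HB Require Import structures.
From mathcomp Require Import all_boot all_order all_algebra.
From mathcomp Require Import reals constructive_ereal ereal exp.
Set Implicit Arguments. Unset Strict Implicit. Unset Printing Implicit Defensive.
Import Order.TTheory GRing.Theory Num.Theory.
Local Open Scope ring_scope.

Definition is_pos_pmf (R : realType) (T : finType) (p : T -> R) : Prop :=
  (forall x, 0 < p x) /\ \sum_(x : T) p x = 1.

Definition is_trans (R : realType) (T : finType) (M : T -> T -> R) : Prop :=
  (forall x y, 0 <= M x y) /\ (forall x, \sum_(y : T) M x y = 1).

(* One term pi(x) M(x,y) ln (M(x,y)/L(x,y)) with the usual conventions:
   0 when pi(x) M(x,y) = 0, +oo when pi(x) M(x,y) > 0 and L(x,y) = 0. *)
Definition KL_term (R : realType) (a m l : R) : \bar R :=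
  if a * m == 0 then 0%E
  else if l == 0 then +oo%E
  else (a * m * ln (m / l))%:E.

Definition KLdiv (R : realType) (T : finType) (pi : T -> R) (M L : T -> T -> R)
  : \bar R :=
  (\sum_(x : T) \sum_(y : T) KL_term (pi x) (M x y) (L x y))%E.

(* State spaces: X = X^(1) x ... x X^(d) (coordinates indexed by 'I_d),
   and X^(S) = prod_{j in S} X^(j). *)
Definition full (d : nat) (X : 'I_d -> finType) : finType :=
  {dffun forall j : 'I_d, X j}.

Definition sub (d : nat) (X : 'I_d -> finType) (S : {set 'I_d}) : finType :=
  {dffun forall j : {j : 'I_d | j \in S}, X (proj1_sig j)}.

Definition restr (d : nat) (X : 'I_d -> finType) (S : {set 'I_d})
  (x : full X) : sub X S :=
  [ffun j : {j : 'I_d | j \in S} => x (proj1_sig j)].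

Arguments restr {d X} S x.

Definition marg (R : realType) (d : nat) (X : 'I_d -> finType) (S : {set 'I_d})
  (pi : full X -> R) (u : sub X S) : R :=
  \sum_(x : full X | restr S x == u) pi x.

Arguments marg {R d X} S pi u.

Definition Pmarg (R : realType) (d : nat) (X : 'I_d -> finType) (S : {set 'I_d})
  (pi : full X -> R) (P : full X -> full X -> R) (u v : sub X S) : R :=
  (\sum_(x : full X | restr S x == u) \sum_(y : full X | restr S y == v)
      pi x * P x y) / marg S pi u.

Arguments Pmarg {R d X} S pi P u v.

Definition tens (R : realType) (d n : nat) (X : 'I_d -> finType)
  (S : 'I_n -> {set 'I_d}) (L : forall i : 'I_n, sub X (S i) -> sub X (S i) -> R)
  (x y : full X) : R :=
  \prod_(i < n) L i (restr (S i) x) (restr (S i) y).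

Arguments tens {R d n X S} L x y.

Definition is_partition (d n : nat) (S : 'I_n -> {set 'I_d}) : Prop :=
  (forall i, S i != set0) /\
  (forall i j, i != j -> [disjoint S i & S j]) /\
  (\bigcup_(i < n) S i = [set: 'I_d]).

From HB Require Import structures.
From mathcomp Require Import all_boot all_order all_algebra.
From mathcomp Require Import reals constructive_ereal ereal exp.
Set Implicit Arguments. Unset Strict Implicit. Unset Printing Implicit Defensive.
Import Order.TTheory GRing.Theory Num.Theory.
Local Open Scope ring_scope.

(* Because the blocks S_i partition the coordinates, x |-> (x^(S_i))_i is a
   bijection from X onto prod_i X^(S_i), so sums of products over X factor
   blockwise.  Hence the S_i-marginal of pi (x) P^(S)_pi is, like that of pi P,
   equal to pi^(S_i) P^(S_i)_pi.  Writing
     ln (M / (x)L) = ln (M / (x)P^(S)_pi) + sum_i ln (P^(S_i)_pi / L_i)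
   and integrating against pi M, for M = P and for M = (x)P^(S)_pi, gives both
   decompositions.  Gibbs' inequality p - q <= p ln (p / q), with equality iff
   q = p, makes each D(P^(S_i)_pi || L_i) nonnegative and zero only at
   L_i = P^(S_i)_pi.  If some L_i vanishes where P^(S_i)_pi does not, all the
   divergences involved are +oo. *)

Lemma prod_sum_fprod (R : comPzSemiRingType) (I : finType) (T_ : I -> finType)
    (f : forall i, T_ i -> R) :
  \prod_i \sum_(v : T_ i) f i v = \sum_(t : fprod T_) \prod_i f i (t i).
Proof.
pose F i := [ffun v => f i v].
have untagF i (j : {i : I & T_ i}) : untag 0 (F i) j = untag 0 (f i) j.
  by rewrite /untag; case: eqP => // e; rewrite ffunE.
transitivity (\sum_(t : fprod T_) \prod_(i in I) F i (t i)); last first.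
  by apply: eq_bigr => t _; apply: eq_bigr => i _; rewrite ffunE.
rewrite (big_fprod _ (+%R : Monoid.add_law 0 *%R)).
under eq_bigr => i _ do rewrite (big_tag (op := +%R : Monoid.com_law 0) f i).
rewrite bigA_distr_big_dep; apply: eq_bigr => g _.
by apply: eq_bigr => i _; rewrite untagF.
Qed.

Section BlockDecomposition.
Variables (d : nat) (X : 'I_d -> finType).

Lemma restr_surj (S0 : {set 'I_d}) (x0 : full X) (u : sub X S0) :
  exists x : full X, restr S0 x = u.
Proof.
have coord k : {a : X k | forall Sk : k \in S0, u (exist _ k Sk) = a}.
  have [Sk | nSk] : ((k \in S0) + ~~ (k \in S0))%type by case: (k \in S0); [left | right].
  - by exists (u (exist _ k Sk)) => Sk'; rewrite (bool_irrelevance Sk' Sk).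
  - by exists (x0 k) => Sk; rewrite Sk in nSk.
exists (finfun (fun k => sval (coord k)) : full X).
by apply/ffunP => -[k Sk]; rewrite !ffunE (svalP (coord k) Sk).
Qed.

Variables (n : nat) (S : 'I_n -> {set 'I_d}).
Hypothesis partS : is_partition S.

Lemma block_of (k : 'I_d) : {i : 'I_n | k \in S i}.
Proof.
case: (pickP (fun i => k \in S i)) => [i Ski | none]; first by exists i.
exfalso; have : k \in \bigcup_(i < n) S i by case: partS => _ [_ ->]; rewrite inE.
by case/bigcupP => i _ Ski; move: (none i); rewrite Ski.
Qed.

Lemma block_uniq (k : 'I_d) (i j : 'I_n) : k \in S i -> k \in S j -> i = j.
Proof.
move=> Ski Skj; apply/eqP; apply: contraT => ij.
case: partS => _ [disjS _].
by move: (disjS _ _ ij) => /disjointFr /(_ Ski); rewrite Skj.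
Qed.

Definition blocks (x : full X) : fprod (fun i => sub X (S i)) :=
  fprod_of_fun (fun i => restr (S i) x).

Definition glue (t : fprod (fun i => sub X (S i))) : full X :=
  finfun (fun k => t (sval (block_of k)) (exist _ k (svalP (block_of k)))).

Lemma blocksK : cancel blocks glue.
Proof.
move=> x; apply/ffunP => k; rewrite ffunE.
by case: (block_of k) => i Ski /=; rewrite /blocks fprodE ffunE.
Qed.

Lemma glueK : cancel glue blocks.
Proof.
move=> t; apply/fprodP => i; rewrite /blocks fprodE.
apply/ffunP => -[k Ski]; rewrite !ffunE /=.
case: (block_of k) => j Skj /=.
have ji := block_uniq Skj Ski; subst j.
by congr (t i (exist _ k _)); apply: bool_irrelevance.
Qed.

Lemma sum_prod_blocks (R : comPzSemiRingType) (f : forall i, sub X (S i) -> R) :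
  \sum_(y : full X) \prod_i f i (restr (S i) y) = \prod_i \sum_(v : sub X (S i)) f i v.
Proof.
rewrite prod_sum_fprod (reindex glue); last first.
  by exists blocks => t _; [apply: glueK | apply: blocksK].
by apply: eq_bigr => t _; apply: eq_bigr => i _; rewrite -[t in RHS]glueK /blocks fprodE.
Qed.

Lemma sum_tens_restr (R : realType) (Q : forall i, sub X (S i) -> sub X (S i) -> R)
    (i : 'I_n) (x : full X) (g : sub X (S i) -> R) :
  (forall j u, j != i -> \sum_v Q j u v = 1) ->
  \sum_y tens Q x y * g (restr (S i) y) = \sum_v Q i (restr (S i) x) v * g v.
Proof.
move=> Q1.
pose h := dfwith (T := fun j => sub X (S j) -> R)
  (fun j => Q j (restr (S j) x)) (fun v => Q i (restr (S i) x) v * g v).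
have hi : h i = fun v => Q i (restr (S i) x) v * g v by rewrite /h dfwith_in.
have hE j : j != i -> h j = Q j (restr (S j) x) by move=> ji; rewrite /h dfwith_out // eq_sym.
transitivity (\sum_y \prod_j h j (restr (S j) y)).
  apply: eq_bigr => y _; rewrite /tens [in RHS](bigD1 i) //= [in LHS](bigD1 i) //=.
  rewrite hi mulrAC; congr (_ * _ * _).
  by apply: eq_bigr => j ji; rewrite hE.
rewrite sum_prod_blocks (bigD1 i) //= hi [X in _ * X]big1 ?mulr1 // => j ji.
by rewrite hE // Q1.
Qed.

Lemma tens_eq0 (R : realType) (L : forall i, sub X (S i) -> sub X (S i) -> R)
    (i : 'I_n) (x y : full X) :
  L i (restr (S i) x) (restr (S i) y) = 0 -> tens L x y = 0.
Proof. by move=> L0; apply/eqP/prodf_eq0; exists i => //; rewrite L0. Qed.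

End BlockDecomposition.

Section Marginals.
Variables (R : realType) (d : nat) (X : 'I_d -> finType).
Variables (pi : full X -> R) (P : full X -> full X -> R).
Hypothesis pi_pmf : is_pos_pmf pi.

Lemma exists_restr (S0 : {set 'I_d}) (u : sub X S0) : exists x, restr S0 x = u.
Proof.
case: (pickP (@predT (full X))) => [x0 _ | full0]; first exact: restr_surj.
by case: pi_pmf => _; rewrite big_pred0 // => /eqP; rewrite eq_sym oner_eq0.
Qed.

Lemma marg_gt0 (S0 : {set 'I_d}) (u : sub X S0) : 0 < marg S0 pi u.
Proof.
case: pi_pmf => pi_gt0 _; have [x <-] := exists_restr u.
rewrite /marg (bigD1 x) //= ltr_pwDl // sumr_ge0 // => y _.
exact: ltW.
Qed.

Lemma sum_restr_fibers (S0 : {set 'I_d}) (F : full X -> R) :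
  \sum_x F x = \sum_(u : sub X S0) \sum_(x | restr S0 x == u) F x.
Proof. by rewrite (partition_big (restr S0) xpredT). Qed.

Lemma mul_marg_Pmarg (S0 : {set 'I_d}) (u v : sub X S0) :
  marg S0 pi u * Pmarg S0 pi P u v
  = \sum_(x | restr S0 x == u) \sum_(y | restr S0 y == v) pi x * P x y.
Proof. by rewrite /Pmarg mulrC divfK // gt_eqF // marg_gt0. Qed.

Lemma sum_pi_restr (S0 : {set 'I_d}) (F : sub X S0 -> R) :
  \sum_x pi x * F (restr S0 x) = \sum_u marg S0 pi u * F u.
Proof.
rewrite (sum_restr_fibers S0); apply: eq_bigr => u _.
by rewrite /marg mulr_suml; apply: eq_bigr => x /eqP ->.
Qed.

Lemma sum_piP_restr (S0 : {set 'I_d}) (F : sub X S0 -> sub X S0 -> R) :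
  \sum_x \sum_y pi x * P x y * F (restr S0 x) (restr S0 y)
  = \sum_u \sum_v marg S0 pi u * Pmarg S0 pi P u v * F u v.
Proof.
rewrite (sum_restr_fibers S0); apply: eq_bigr => u _.
under [RHS]eq_bigr => v _ do rewrite mul_marg_Pmarg mulr_suml.
rewrite [RHS]exchange_big /=; apply: eq_bigr => x /eqP xu.
rewrite (sum_restr_fibers S0); apply: eq_bigr => v _.
by rewrite mulr_suml; apply: eq_bigr => y /eqP yv; rewrite xu yv.
Qed.

Hypothesis P_trans : is_trans P.

Lemma piP_ge0 x y : 0 <= pi x * P x y.
Proof. by case: pi_pmf => pi_gt0 _; case: P_trans => P_ge0 _; rewrite mulr_ge0 // ltW. Qed.

Lemma Pmarg_trans (S0 : {set 'I_d}) : is_trans (Pmarg S0 pi P).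
Proof.
split=> [u v | u].
  apply: divr_ge0; last exact/ltW/marg_gt0.
  by apply: sumr_ge0 => x _; apply: sumr_ge0 => y _; exact: piP_ge0.
rewrite /Pmarg -mulr_suml exchange_big /=.
have -> : \sum_(x | restr S0 x == u) \sum_v \sum_(y | restr S0 y == v) pi x * P x y
          = marg S0 pi u.
  apply: eq_bigr => x _; rewrite -sum_restr_fibers -mulr_sumr.
  by case: P_trans => _ ->; rewrite mulr1.
by rewrite divff // gt_eqF // marg_gt0.
Qed.

Lemma Pmarg_restr_neq0 (S0 : {set 'I_d}) x y : pi x * P x y != 0 ->
  Pmarg S0 pi P (restr S0 x) (restr S0 y) != 0.
Proof.
move=> nz; suff : 0 < marg S0 pi (restr S0 x) * Pmarg S0 pi P (restr S0 x) (restr S0 y).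
  by rewrite lt0r mulf_eq0 negb_or => /andP[/andP[_]].
rewrite mul_marg_Pmarg (bigD1 x) //= (bigD1 y) //= -addrA ltr_pwDl ?lt0r ?nz ?piP_ge0 //.
apply: addr_ge0; first by apply: sumr_ge0 => y' _; exact: piP_ge0.
by apply: sumr_ge0 => x' _; apply: sumr_ge0 => y' _; exact: piP_ge0.
Qed.

Lemma Pmarg_neq0_lift (S0 : {set 'I_d}) (u v : sub X S0) : Pmarg S0 pi P u v != 0 ->
  exists x y, [/\ restr S0 x = u, restr S0 y = v & pi x * P x y != 0].
Proof.
move=> nz; have /eqP : marg S0 pi u * Pmarg S0 pi P u v != 0.
  by rewrite mulf_neq0 // gt_eqF // marg_gt0.
rewrite mul_marg_Pmarg => /psumr_neq0P[x _ | x /andP[/eqP xu]].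
  by apply: sumr_ge0 => y _; exact: piP_ge0.
move=> /gt_eqF/negbT/eqP/psumr_neq0P[y _ | y /andP[/eqP yv /gt_eqF/negbT nzxy]].
  exact: piP_ge0.
by exists x, y.
Qed.

End Marginals.

Lemma ln_leif (R : realType) (z : R) : 0 < z -> ln z <= z - 1 ?= iff (z == 1).
Proof.
move=> z_gt0; apply/leifP; have [->|z1] := eqVneq z 1; first by rewrite ln1 subrr.
have := @expR_gt1Dx R (ln z); rewrite ln_eq0 // z1 lnK ?posrE // => /(_ isT).
by rewrite ltrBrDl.
Qed.

Lemma ln_prod (R : realType) (I : finType) (f : I -> R) :
  (forall i, 0 < f i) -> ln (\prod_i f i) = \sum_i ln (f i).
Proof.
move=> f_gt0.
suff [] : 0 < \prod_i f i /\ ln (\prod_i f i) = \sum_i ln (f i) by [].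
apply: (big_ind2 (fun p s => 0 < p /\ ln p = s)) => [|p1 s1 p2 s2 [p1_gt0 <-] [p2_gt0 <-]|i _].
- by rewrite ln1 ltr01.
- by rewrite mulr_gt0 // lnM.
- by [].
Qed.

Lemma ln_div_prod (R : realType) (I : finType) (m : R) (p l : I -> R) :
  0 < m -> (forall i, 0 < p i) -> (forall i, 0 < l i) ->
  ln (m / \prod_i l i) = ln (m / \prod_i p i) + \sum_i ln (p i / l i).
Proof.
move=> m_gt0 p_gt0 l_gt0.
have prod_gt0 (f : I -> R) : (forall i, 0 < f i) -> 0 < \prod_i f i.
  by move=> f_gt0; apply: prodr_gt0 => i _.
rewrite !ln_div ?posrE ?prod_gt0 // !ln_prod //.
under [X in _ = _ + X]eq_bigr => i _ do rewrite ln_div ?posrE //.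
by rewrite sumrB addrA subrK.
Qed.

Section KullbackLeibler.
Variables (R : realType) (T : finType).
Implicit Types (a : T -> R) (M L : T -> T -> R).

Definition abs_cont a M L : bool :=
  [forall x, forall y, (a x * M x y != 0) ==> (L x y != 0)].

Lemma abs_contP a M L :
  reflect (forall x y, a x * M x y != 0 -> L x y != 0) (abs_cont a M L).
Proof. exact: 'forall_'forall_implyP. Qed.

Lemma abs_contPn a M L :
  ~~ abs_cont a M L -> exists x y, a x * M x y != 0 /\ L x y = 0.
Proof.
move=> /forallPn[x /forallPn[y]]; rewrite negb_imply negbK => /andP[nz /eqP L0].
by exists x, y.
Qed.

Lemma abs_cont_refl a M : abs_cont a M M.
Proof. by apply/abs_contP => x y; rewrite mulf_eq0 negb_or => /andP[]. Qed.

Definition KLsum a M L : R := \sum_x \sum_y a x * M x y * ln (M x y / L x y).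

Lemma KLsum_refl a M : KLsum a M M = 0.
Proof.
apply: big1 => x _; apply: big1 => y _.
by have [->|nz] := eqVneq (M x y) 0; rewrite ?mulr0 ?mul0r // divff // ln1 mulr0.
Qed.

Lemma KL_term_neqNy (w m l : R) : KL_term w m l != -oo%E.
Proof. by rewrite /KL_term; case: ifP => //; case: ifP. Qed.

Lemma KLdiv_neqNy a M L : KLdiv a M L != -oo%E.
Proof.
rewrite /KLdiv esum_eqNy; apply/existsPn => x; rewrite esum_eqNy.
by apply/negP => /andP[_ /existsP[y]]; rewrite (negbTE (KL_term_neqNy _ _ _)) andbF.
Qed.

Lemma KLdiv_abs_cont a M L : abs_cont a M L -> KLdiv a M L = (KLsum a M L)%:E.
Proof.
move/abs_contP => ac; rewrite /KLdiv /KLsum -sumEFin; apply: eq_bigr => x _.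
rewrite -sumEFin; apply: eq_bigr => y _; rewrite /KL_term.
have [->|nz] := eqVneq (a x * M x y) 0; first by rewrite mul0r.
by rewrite (negbTE (ac x y nz)).
Qed.

Lemma KLdiv_not_abs_cont a M L : ~~ abs_cont a M L -> KLdiv a M L = +oo%E.
Proof.
move=> /abs_contPn[x [y [nz L0]]].
apply/eqP; rewrite esum_eqy => [|x' _]; last first.
  rewrite esum_eqNy; apply/negP => /existsP[y'].
  by rewrite (negbTE (KL_term_neqNy _ _ _)) andbF.
apply/existsP; exists x; rewrite /= esum_eqy => [|y' _]; last exact: KL_term_neqNy.
by apply/existsP; exists y; rewrite /= /KL_term (negbTE nz) L0 eqxx.
Qed.

Lemma KL_gap_leif (p q : R) : 0 <= p -> 0 <= q -> (p != 0 -> q != 0) ->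
  p - q <= p * ln (p / q) ?= iff (q == p).
Proof.
move=> p_ge0 q_ge0 pq; have [->|p0] := eqVneq p 0.
  apply/leifP; rewrite mul0r sub0r oppr_eq0.
  by have [//|q0] := eqVneq q 0; rewrite oppr_lt0 lt0r q0.
have p_gt0 : 0 < p by rewrite lt0r p0.
have q_gt0 : 0 < q by rewrite lt0r pq.
have -> : p * ln (p / q) = - (p * ln (q / p)).
  by rewrite -mulrN -lnV ?posrE ?divr_gt0 // invf_div.
have -> : p - q = - (p * (q / p - 1)).
  by rewrite mulrBr mulr1 [p * _]mulrC divfK // opprB.
have -> : (q == p) = (q / p == 1) by rewrite -[q / p == 1](inj_eq (mulIf p0)) divfK // mul1r.
rewrite (nmono_leif (@lerN2 R)) (mono_leif (ler_pM2l p_gt0)).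
exact/ln_leif/divr_gt0.
Qed.

Lemma KLsum_leif a M L : (forall x, 0 < a x) -> is_trans M -> is_trans L ->
  abs_cont a M L -> 0 <= KLsum a M L ?= iff [forall x, forall y, L x y == M x y].
Proof.
move=> a_gt0 [M_ge0 M1] [L_ge0 L1] /abs_contP ac.
have balance : \sum_x a x * \sum_y (M x y - L x y) = 0.
  by apply: big1 => x _; rewrite sumrB M1 L1 subrr mulr0.
have -> : KLsum a M L = \sum_x a x * \sum_y M x y * ln (M x y / L x y).
  by apply: eq_bigr => x _; rewrite mulr_sumr; apply: eq_bigr => y _; rewrite mulrA.
rewrite -{1}balance; apply: leif_sum => x _; rewrite (mono_leif (ler_pM2l (a_gt0 x))).
apply: leif_sum => y _; apply: KL_gap_leif => // Mxy.
by apply: ac; rewrite mulf_neq0 // gt_eqF.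
Qed.

End KullbackLeibler.

Section ChainRule.
Variables (R : realType) (d n : nat) (X : 'I_d -> finType).
Variables (S : 'I_n -> {set 'I_d}) (pi : full X -> R) (P : full X -> full X -> R).
Hypotheses (partS : is_partition S) (pi_pmf : is_pos_pmf pi) (P_trans : is_trans P).

Local Notation PS := (fun i : 'I_n => Pmarg (S i) pi P).
Local Notation kernels := (forall i : 'I_n, sub X (S i) -> sub X (S i) -> R).

Definition blockwise_abs_cont (L : kernels) : bool :=
  [forall i, abs_cont (marg (S i) pi) (PS i) (L i)].

Lemma PS_trans i : is_trans (PS i).
Proof. exact: Pmarg_trans. Qed.

Lemma PS_ge0 i u v : 0 <= PS i u v.
Proof. by case: (PS_trans i) => ->. Qed.

Lemma sum_tensPS_restr i (F : sub X (S i) -> sub X (S i) -> R) :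
  \sum_x \sum_y pi x * tens PS x y * F (restr (S i) x) (restr (S i) y)
  = \sum_u \sum_v marg (S i) pi u * PS i u v * F u v.
Proof.
transitivity (\sum_x pi x * \sum_v PS i (restr (S i) x) v * F (restr (S i) x) v).
  apply: eq_bigr => x _.
  rewrite -(sum_tens_restr partS (Q := PS) x (F (restr (S i) x))) => [|j u _].
    by rewrite mulr_sumr; apply: eq_bigr => y _; rewrite mulrA.
  by case: (PS_trans j) => _ ->.
rewrite (sum_pi_restr pi (fun u => \sum_v PS i u v * F u v)).
apply: eq_bigr => u _; rewrite mulr_sumr.
by apply: eq_bigr => v _; rewrite mulrA.
Qed.

Lemma abs_cont_P_tensPS : abs_cont pi P (tens PS).
Proof. by apply/abs_contP => x y nz; apply/prodf_neq0 => i _; exact: Pmarg_restr_neq0. Qed.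

Lemma abs_cont_tens_blockwise (M : full X -> full X -> R) (L : kernels) :
  abs_cont pi M (tens PS) -> blockwise_abs_cont L -> abs_cont pi M (tens L).
Proof.
move=> /abs_contP M_PS /forallP L_ac; apply/abs_contP => x y /M_PS /prodf_neq0 PS_nz.
apply/prodf_neq0 => i _; apply: (abs_contP _ _ _ (L_ac i)).
by rewrite mulf_neq0 ?PS_nz // gt_eqF // marg_gt0.
Qed.

Lemma abs_cont_P_tens (L : kernels) : abs_cont pi P (tens L) = blockwise_abs_cont L.
Proof.
apply/idP/idP => [|L_ac]; last exact: abs_cont_tens_blockwise abs_cont_P_tensPS L_ac.
apply: contraLR => /forallPn[i /abs_contPn[u [v [nz L0]]]].
have PS_nz : PS i u v != 0 by move: nz; rewrite mulf_eq0 negb_or => /andP[].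
have [x [y [xu yv nzxy]]] := Pmarg_neq0_lift pi_pmf P_trans PS_nz.
apply/abs_contP => /(_ x y nzxy); apply/negP/negPn/eqP.
by apply: (tens_eq0 (i := i)); rewrite xu yv.
Qed.

Lemma abs_cont_tensPS_tens (L : kernels) :
  abs_cont pi (tens PS) (tens L) = blockwise_abs_cont L.
Proof.
apply/idP/idP => [|L_ac]; last exact: abs_cont_tens_blockwise (abs_cont_refl _ _) L_ac.
apply: contraLR => /forallPn[i /abs_contPn[u [v [nz L0]]]].
have [x xu] := exists_restr pi_pmf u.
have row_uv : \sum_y tens PS x y * (restr (S i) y == v)%:R = PS i u v.
  rewrite (sum_tens_restr partS (Q := PS) x (fun w => (w == v)%:R)) => [|j w _]; last first.
    by case: (PS_trans j) => _ ->.
  by rewrite xu (bigD1 v) //= eqxx mulr1 big1 ?addr0 // => w /negbTE ->; rewrite mulr0.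
have [y] : exists y, tens PS x y * (restr (S i) y == v)%:R != 0.
  apply/existsP; apply: contraTT nz => /existsPn all0.
  rewrite mulf_eq0 -row_uv big1 ?eqxx ?orbT // => y _; exact/eqP/negPn/all0.
rewrite mulf_eq0 negb_or pnatr_eq0 eqb0 negbK => /andP[PS_nz /eqP yv].
have nzxy : pi x * tens PS x y != 0.
  by case: pi_pmf => pi_gt0 _; rewrite mulf_neq0 // gt_eqF.
apply/abs_contP => /(_ x y nzxy); apply/negP/negPn/eqP.
by apply: (tens_eq0 (i := i)); rewrite xu yv.
Qed.

Lemma KLsum_chain (M : full X -> full X -> R) (L : kernels) :
  (forall x y, 0 <= M x y) -> abs_cont pi M (tens PS) ->
  (forall i F, \sum_x \sum_y pi x * M x y * F (restr (S i) x) (restr (S i) y)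
               = \sum_u \sum_v marg (S i) pi u * PS i u v * F u v) ->
  (forall i, is_trans (L i)) -> blockwise_abs_cont L ->
  KLsum pi M (tens L) = KLsum pi M (tens PS) + \sum_i KLsum (marg (S i) pi) (PS i) (L i).
Proof.
move=> M_ge0 M_PS M_marg L_trans L_ac.
have split_log x y : pi x * M x y * ln (M x y / tens L x y)
    = pi x * M x y * ln (M x y / tens PS x y)
      + \sum_i pi x * M x y * ln (PS i (restr (S i) x) (restr (S i) y)
                                   / L i (restr (S i) x) (restr (S i) y)).
  have [->|nz] := eqVneq (pi x * M x y) 0.
    by rewrite !mul0r add0r big1 // => i _; rewrite mul0r.
  have /prodf_neq0 PS_nz := abs_contP _ _ _ M_PS x y nz.
  have /prodf_neq0 L_nz := abs_contP _ _ _ (abs_cont_tens_blockwise M_PS L_ac) x y nz.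
  have PS_gt0 i : 0 < PS i (restr (S i) x) (restr (S i) y) by rewrite lt0r PS_nz ?PS_ge0.
  have L_gt0 i : 0 < L i (restr (S i) x) (restr (S i) y).
    by rewrite lt0r L_nz //; case: (L_trans i) => ->.
  have M_gt0 : 0 < M x y.
    by rewrite lt0r M_ge0 andbT; apply: contraNneq nz => ->; rewrite mulr0.
  by rewrite -mulr_sumr -mulrDr /tens (ln_div_prod M_gt0 PS_gt0 L_gt0).
rewrite /KLsum; under eq_bigr => x _ do under eq_bigr => y _ do rewrite split_log.
under eq_bigr => x _ do rewrite big_split /=.
rewrite big_split /=; congr (_ + _).
under eq_bigr => x _ do rewrite exchange_big /=.
rewrite exchange_big; apply: eq_bigr => i _.
exact: (M_marg i (fun u v => ln (PS i u v / L i u v))).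
Qed.

Lemma sum_KLdiv_blocks (L : kernels) : blockwise_abs_cont L ->
  (\sum_i KLdiv (marg (S i) pi) (PS i) (L i)
   = (\sum_i KLsum (marg (S i) pi) (PS i) (L i))%:E)%E.
Proof.
move/forallP => L_ac; rewrite -sumEFin; apply: eq_bigr => i _.
exact: KLdiv_abs_cont.
Qed.

Lemma sum_KLdiv_blocks_oo (L : kernels) : ~~ blockwise_abs_cont L ->
  (\sum_i KLdiv (marg (S i) pi) (PS i) (L i) = +oo)%E.
Proof.
move=> /forallPn[i L_nac]; apply/eqP; rewrite esum_eqy => [|j _]; last exact: KLdiv_neqNy.
by apply/existsP; exists i; rewrite /= KLdiv_not_abs_cont.
Qed.

Lemma KLdiv_P_tens (L : kernels) : (forall i, is_trans (L i)) ->
  (KLdiv pi P (tens L)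
   = KLdiv pi P (tens PS) + \sum_i KLdiv (marg (S i) pi) (PS i) (L i))%E.
Proof.
move=> L_trans; rewrite (KLdiv_abs_cont abs_cont_P_tensPS).
have [L_ac | L_nac] := boolP (blockwise_abs_cont L); last first.
  by rewrite KLdiv_not_abs_cont ?abs_cont_P_tens // sum_KLdiv_blocks_oo.
rewrite KLdiv_abs_cont ?abs_cont_P_tens // sum_KLdiv_blocks // -EFinD.
congr (_%:E); apply: KLsum_chain => //.
- by case: P_trans.
- exact: abs_cont_P_tensPS.
- by move=> i F; exact: sum_piP_restr.
Qed.

Lemma KLdiv_tensPS_tens (L : kernels) : (forall i, is_trans (L i)) ->
  (KLdiv pi (tens PS) (tens L) = \sum_i KLdiv (marg (S i) pi) (PS i) (L i))%E.
Proof.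
move=> L_trans; have [L_ac | L_nac] := boolP (blockwise_abs_cont L); last first.
  by rewrite KLdiv_not_abs_cont ?abs_cont_tensPS_tens // sum_KLdiv_blocks_oo.
rewrite KLdiv_abs_cont ?abs_cont_tensPS_tens // sum_KLdiv_blocks //.
congr (_%:E); rewrite KLsum_chain ?KLsum_refl ?add0r //.
- by move=> x y; apply: prodr_ge0 => i _; exact: PS_ge0.
- exact: abs_cont_refl.
- exact: sum_tensPS_restr.
Qed.

Lemma tensPS_minimizer (L : kernels) : (forall i, is_trans (L i)) ->
  (KLdiv pi P (tens PS) <= KLdiv pi P (tens L))%E /\
  (KLdiv pi P (tens L) = KLdiv pi P (tens PS) -> forall x y, tens L x y = tens PS x y).
Proof.
move=> L_trans; rewrite (KLdiv_P_tens L_trans) (KLdiv_abs_cont abs_cont_P_tensPS).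
have [L_ac | L_nac] := boolP (blockwise_abs_cont L); last first.
  by rewrite sum_KLdiv_blocks_oo //; split=> //; exact: leey.
have KL_leif i := KLsum_leif (marg_gt0 pi_pmf (S0 := S i)) (PS_trans i) (L_trans i)
  (forallP L_ac i).
rewrite sum_KLdiv_blocks // -EFinD lee_fin lerDl; split.
  by apply: sumr_ge0 => i _; exact: (KL_leif i).1.
move=> [] /eqP; rewrite -subr_eq0 addrAC subrr add0r => /eqP sum0 x y.
have KL0 := psumr_eq0P (fun i _ => (KL_leif i).1) sum0.
apply: eq_bigr => i _; have := (KL_leif i).2; rewrite (KL0 i isT) eqxx.
by move=> /esym/forallP/(_ (restr (S i) x))/forallP/(_ (restr (S i) y))/eqP.
Qed.

End ChainRule.

Unset Implicit Arguments.

Theorem theorem2p22 (R : realType) (d n : nat) (X : 'I_d -> finType)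
  (S : 'I_n -> {set 'I_d}) (pi : full X -> R) (P : full X -> full X -> R)
  (L : forall i : 'I_n, sub X (S i) -> sub X (S i) -> R) :
  is_partition S -> is_pos_pmf pi -> is_trans P ->
  (forall i, is_trans (L i)) ->
  let PS := fun i : 'I_n => Pmarg (S i) pi P in
  (KLdiv pi P (tens L)
     = KLdiv pi P (tens PS) + KLdiv pi (tens PS) (tens L))%E /\
  (KLdiv pi P (tens L)
     = KLdiv pi P (tens PS)
       + \sum_(i < n) KLdiv (marg (S i) pi) (PS i) (L i))%E /\
  (* consequently: tens PS is the unique minimizer, with minimum value
     KLdiv pi P (tens PS) *)
  (forall i, is_trans (PS i)) /\
  (forall L' : forall i : 'I_n, sub X (S i) -> sub X (S i) -> R,
     (forall i, is_trans (L' i)) ->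
     (KLdiv pi P (tens PS) <= KLdiv pi P (tens L'))%E /\
     (KLdiv pi P (tens L') = KLdiv pi P (tens PS) ->
        forall x y, tens L' x y = tens PS x y)).
Proof.
move=> partS pi_pmf P_trans L_trans PS.
split; first by rewrite (KLdiv_tensPS_tens partS pi_pmf P_trans L_trans); exact: KLdiv_P_tens.
split; first exact: KLdiv_P_tens.
split; first by move=> i; exact: PS_trans.
by move=> L' L'_trans; exact: tensPS_minimizer.
Qed.
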